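(* For a positive integer $n$ let $\Delta^{(odd)}_3([0,n))$ denote the number of odd evil integers in $[0,n)$ divisible by $3$ minus the number of odd odious integers in $[0,n)$ divisible by $3$. Then $$\lim_{n\to\infty}\frac{\ln \Delta^{(odd)}_3([0,n))}{\ln n}=\frac{\ln 3}{\ln 4}.$$
   Context: A nonnegative integer is called evil if its binary expansion contains an even number of 1's, and odious if it contains an odd number of 1's. $[0,n)$ denotes the set of integers $x$ with $0\le x<n$. *)

From Stdlib Require Import Reals ZArith List Arith Bool.
From Coquelicot Require Import Coquelicot.

Fixpoint pos_ones (p : positive) : nat :=
  match p with
  | xH => 1
  | xO q => pos_ones q
  | xI q => S (pos_ones q)
  end.

Definition ones (x : nat) : nat :=
  match N.of_nat x with
  | N0 => 0
  | Npos p => pos_ones p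
  end.

Definition evil (x : nat) : bool := Nat.even (ones x).
Definition odious (x : nat) : bool := Nat.odd (ones x).

Definition count_below (P : nat -> bool) (n : nat) : nat :=
  length (filter P (seq 0 n)).

Definition Delta_odd3 (n : nat) : Z :=
  (Z.of_nat (count_below (fun x => andb (andb (Nat.odd x) (Nat.eqb (x mod 3) 0)) (evil x)) n)
   - Z.of_nat (count_below (fun x => andb (andb (Nat.odd x) (Nat.eqb (x mod 3) 0)) (odious x)) n))%Z.

From Stdlib Require Import Reals ZArith NArith List Arith Bool Lia Lra.
From Coquelicot Require Import Coquelicot.

Local Open Scope nat_scope.

(* Let s(x) = +1 if x is evil and -1 otherwise, so s(2y) = s(y) and s(2y+1) = -s(y).
   Among 4m, ..., 4m+3 only 4m+1 and 4m+3 are odd; their signs are -s(m) and s(m) and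
   their residues mod 3 are those of m+1 and m.  Grouping [0,4m) into such blocks gives
   Delta(4m) = G(m) := sum_{y<m} s(y) chi(y), where chi(y) = 1, 0, -1 for y = 0, 1, 2
   (mod 3).  The same grouping applied to G gives G(4m) = 3 G(m), because
   chi(y) + chi(y+1) + chi(y+2) = 0.  Hence G, and with it Delta, stays within constant
   factors of 3^k on [8 4^k, 32 4^k), i.e. ln Delta(n) = (ln 3 / ln 4) ln n + O(1). *)

Lemma ones_double y : ones (2 * y) = ones y.
Proof. unfold ones. rewrite Nat2N.inj_mul. now destruct (N.of_nat y). Qed.

Lemma ones_double_succ y : ones (2 * y + 1) = S (ones y).
Proof. unfold ones. rewrite Nat2N.inj_add, Nat2N.inj_mul. now destruct (N.of_nat y). Qed.

Definition tm_sign (x : nat) : Z := if evil x then 1%Z else (-1)%Z.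

Lemma tm_sign_double y : tm_sign (2 * y) = tm_sign y.
Proof. unfold tm_sign, evil. now rewrite ones_double. Qed.

Lemma tm_sign_double_succ y : tm_sign (2 * y + 1) = (- tm_sign y)%Z.
Proof.
  unfold tm_sign, evil. rewrite ones_double_succ, Nat.even_succ, <- Nat.negb_even.
  now destruct (Nat.even (ones y)).
Qed.

Lemma tm_sign_abs x : Z.abs (tm_sign x) = 1%Z.
Proof. unfold tm_sign. now destruct (evil x). Qed.

Lemma tm_sign_quadruple m :
  tm_sign (4 * m) = tm_sign m /\ tm_sign (4 * m + 1) = (- tm_sign m)%Z /\
  tm_sign (4 * m + 2) = (- tm_sign m)%Z /\ tm_sign (4 * m + 3) = tm_sign m.
Proof.
  replace (4 * m) with (2 * (2 * m)) by lia.
  replace (2 * (2 * m) + 2) with (2 * (2 * m + 1)) by lia.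
  replace (2 * (2 * m) + 3) with (2 * (2 * m + 1) + 1) by lia.
  rewrite !tm_sign_double, !tm_sign_double_succ, tm_sign_double. lia.
Qed.

Lemma odd_quadruple_add m i : Nat.odd (4 * m + i) = Nat.odd i.
Proof. now rewrite Nat.odd_add, Nat.odd_mul. Qed.

Lemma mod3_quadruple_add m i : (4 * m + i) mod 3 = (m mod 3 + i) mod 3.
Proof.
  rewrite (Nat.div_mod_eq m 3) at 1.
  replace (4 * (3 * (m / 3) + m mod 3) + i) with (m mod 3 + i + (4 * (m / 3) + m mod 3) * 3)
    by lia.
  apply Nat.Div0.mod_add.
Qed.

Lemma mod3_cases m : m mod 3 = 0 \/ m mod 3 = 1 \/ m mod 3 = 2.
Proof. pose proof (Nat.mod_upper_bound m 3). lia. Qed.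

Fixpoint zsum (f : nat -> Z) (n : nat) : Z :=
  match n with 0 => 0%Z | S k => (zsum f k + f k)%Z end.

Lemma zsum_ext f g n : (forall x, f x = g x) -> zsum f n = zsum g n.
Proof. intro Hfg. induction n as [|n IH]; cbn; [easy|]. now rewrite IH, Hfg. Qed.

Lemma zsum_scale c f n : zsum (fun x => c * f x)%Z n = (c * zsum f n)%Z.
Proof. induction n as [|n IH]; cbn; [lia|]. rewrite IH. lia. Qed.

Lemma zsum_add f n r : zsum f (n + r) = (zsum f n + zsum (fun i => f (n + i)%nat) r)%Z.
Proof.
  induction r as [|r IH]; cbn; [now rewrite Nat.add_0_r; lia|].
  rewrite Nat.add_succ_r. cbn. rewrite IH. lia.
Qed.

Lemma zsum_blocks b f m :
  zsum f (b * m) = zsum (fun j => zsum (fun i => f (b * j + i)) b) m.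
Proof.
  induction m as [|m IH]; cbn; [now rewrite Nat.mul_0_r|].
  now rewrite Nat.mul_succ_r, zsum_add, IH.
Qed.

Lemma zsum_abs_le f n : (forall x, (Z.abs (f x) <= 1)%Z) -> (Z.abs (zsum f n) <= Z.of_nat n)%Z.
Proof. intro Hf. induction n as [|n IH]; cbn [zsum]; [easy|]. specialize (Hf n). lia. Qed.

Lemma count_below_succ P n : count_below P (S n) = count_below P n + (if P n then 1 else 0).
Proof.
  unfold count_below. rewrite seq_S, filter_app, length_app. cbn. now destruct (P n).
Qed.

Definition odd3_sign (x : nat) : Z :=
  if Nat.odd x && (x mod 3 =? 0) then tm_sign x else 0%Z.

Lemma odious_negb_evil x : odious x = negb (evil x).
Proof. unfold odious, evil. now rewrite <- Nat.negb_even. Qed.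

Lemma Delta_odd3_zsum n : Delta_odd3 n = zsum odd3_sign n.
Proof.
  induction n as [|n IH]; [reflexivity|]. cbn [zsum]. rewrite <- IH.
  unfold Delta_odd3. rewrite !count_below_succ, odious_negb_evil.
  unfold odd3_sign, tm_sign.
  destruct (Nat.odd n && (n mod 3 =? 0)), (evil n); cbn; lia.
Qed.

Definition mod3_weight (y : nat) : Z :=
  match (y mod 3)%nat with 0 => 1%Z | 1 => 0%Z | _ => (-1)%Z end.

Definition quarter_sign (y : nat) : Z := (tm_sign y * mod3_weight y)%Z.

Lemma odd3_sign_block m : zsum (fun i => odd3_sign (4 * m + i)) 4 = quarter_sign m.
Proof.
  cbn [zsum]. unfold odd3_sign, quarter_sign, mod3_weight.
  rewrite !odd_quadruple_add, !mod3_quadruple_add, Nat.add_0_r.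
  destruct (tm_sign_quadruple m) as (_ & -> & _ & ->).
  destruct (mod3_cases m) as [-> | [-> | ->]]; cbn -[Z.mul]; lia.
Qed.

Lemma quarter_sign_block m : zsum (fun i => quarter_sign (4 * m + i)) 4 = (3 * quarter_sign m)%Z.
Proof.
  cbn [zsum]. unfold quarter_sign, mod3_weight.
  rewrite !mod3_quadruple_add, !Nat.add_0_r.
  destruct (tm_sign_quadruple m) as (-> & -> & -> & ->).
  destruct (mod3_cases m) as [-> | [-> | ->]]; cbn -[Z.mul]; lia.
Qed.

Lemma zsum_odd3_quadruple m : zsum odd3_sign (4 * m) = zsum quarter_sign m.
Proof. rewrite zsum_blocks. apply zsum_ext, odd3_sign_block. Qed.

Lemma zsum_quarter_quadruple m : zsum quarter_sign (4 * m) = (3 * zsum quarter_sign m)%Z.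
Proof. rewrite zsum_blocks, <- zsum_scale. apply zsum_ext, quarter_sign_block. Qed.

Lemma zsum_odd3_near m r :
  r < 4 -> (Z.abs (zsum odd3_sign (4 * m + r) - zsum quarter_sign m) <= 1)%Z.
Proof.
  intro Hr. rewrite zsum_add, zsum_odd3_quadruple.
  assert (Heven : forall i, Nat.odd i = false -> odd3_sign (4 * m + i) = 0%Z).
  { intros i Hi. unfold odd3_sign. now rewrite odd_quadruple_add, Hi. }
  assert (Hodd : (Z.abs (odd3_sign (4 * m + 1)) <= 1)%Z).
  { unfold odd3_sign. destruct (_ && _); [rewrite tm_sign_abs|]; cbn; lia. }
  destruct r as [|[|[|[|r]]]]; cbn [zsum]; rewrite ?(Heven 0), ?(Heven 2) by reflexivity; lia.
Qed.

Lemma zsum_quarter_near m r :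
  r < 4 -> (Z.abs (zsum quarter_sign (4 * m + r) - 3 * zsum quarter_sign m) <= 3)%Z.
Proof.
  intro Hr. rewrite zsum_add, zsum_quarter_quadruple.
  assert (Hq : forall x, (Z.abs (quarter_sign x) <= 1)%Z).
  { intro x. unfold quarter_sign, mod3_weight. rewrite Z.abs_mul, tm_sign_abs.
    destruct (mod3_cases x) as [-> | [-> | ->]]; cbn; lia. }
  pose proof (zsum_abs_le (fun i => quarter_sign (4 * m + i)) r (fun i => Hq _)). lia.
Qed.

Lemma zsum_quarter_base n : 8 <= n < 32 -> (3 <= zsum quarter_sign n <= 9)%Z.
Proof.
  intro Hn.
  assert (C : forallb (fun n => (3 <=? zsum quarter_sign n)%Z && (zsum quarter_sign n <=? 9)%Z)
                (seq 8 24) = true) by (vm_compute; reflexivity).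
  rewrite forallb_forall in C. specialize (C n ltac:(apply in_seq; lia)).
  apply andb_prop in C as [C1 C2]. apply Z.leb_le in C1, C2. lia.
Qed.

Local Open Scope R_scope.

Section GeometricGrowth.

Variables (b n0 : nat) (c e d L U : R) (G : nat -> R).
Hypothesis b_ge2 : (2 <= b)%nat.
Hypothesis n0_pos : (1 <= n0)%nat.
Hypothesis c_ge0 : 0 <= c.
Hypothesis e_le : e <= (c - 1) * d.
Hypothesis G_step :
  forall m r, (n0 <= m)%nat -> (r < b)%nat -> Rabs (G (b * m + r) - c * G m) <= e.
Hypothesis G_base : forall n, (n0 <= n < b * n0)%nat -> L + d <= G n <= U - d.

(* The margin [d] absorbs the error [e], since [c * d - e >= d]. *)
Lemma geometric_growth n :
  (n0 <= n)%nat ->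
  exists k, (n0 * b ^ k <= n < n0 * b ^ S k)%nat /\ L * c ^ k + d <= G n <= U * c ^ k - d.
Proof.
  induction n as [n IH] using lt_wf_ind. intro Hn.
  destruct (Nat.lt_ge_cases n (b * n0)) as [Hsmall | Hlarge].
  { exists 0%nat. cbn. specialize (G_base n ltac:(lia)). split; [lia | lra]. }
  pose proof (Nat.div_mod_eq n b) as Hdiv.
  pose proof (Nat.mod_upper_bound n b ltac:(lia)) as Hr.
  set (m := (n / b)%nat) in Hdiv. set (r := (n mod b)%nat) in Hdiv, Hr.
  assert (Hm : (n0 <= m)%nat) by (apply Nat.div_le_lower_bound; lia).
  destruct (IH m ltac:(apply Nat.div_lt; lia) Hm) as [k [[Hk1 Hk2] [HG1 HG2]]].
  pose proof (G_step m r Hm Hr) as Hstep.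
  rewrite <- Hdiv in Hstep. apply Rabs_le_between' in Hstep.
  exists (S k). split.
  - cbn [Nat.pow] in Hk2 |- *. split; nia.
  - cbn [pow]. nra.
Qed.

End GeometricGrowth.

Lemma Delta_odd3_geometric n :
  (32 <= n)%nat ->
  exists k, 32 * 4 ^ k <= INR n <= 128 * 4 ^ k /\ 3 ^ k <= IZR (Delta_odd3 n) <= 11 * 3 ^ k.
Proof.
  intro Hn.
  pose proof (Nat.div_mod_eq n 4) as Hdiv.
  pose proof (Nat.mod_upper_bound n 4 ltac:(lia)) as Hr.
  set (m := (n / 4)%nat) in Hdiv. set (r := (n mod 4)%nat) in Hdiv, Hr. clearbody m r.
  (* Error [3]: three leftover terms of size at most 1; margin [3/2] fits the base values 3..9. *)
  destruct (geometric_growth 4 8 3 3 (3 / 2) 1 11 (fun m => IZR (zsum quarter_sign m)))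
    with (n := m) as [k [[Hk1 Hk2] [HG1 HG2]]]; try lia; try lra.
  - intros m' r' _ Hr'. rewrite <- mult_IZR, <- minus_IZR, Rabs_Zabs.
    apply IZR_le, zsum_quarter_near, Hr'.
  - intros m' Hm'. destruct (zsum_quarter_base m' Hm') as [H1 H2].
    apply IZR_le in H1, H2. lra.
  - assert (Hn1 : (32 * 4 ^ k <= n)%nat) by lia.
    assert (Hn2 : (n <= 128 * 4 ^ k)%nat) by (cbn [Nat.pow] in Hk2; lia).
    apply le_INR in Hn1, Hn2. rewrite mult_INR, pow_INR in Hn1, Hn2.
    pose proof (zsum_odd3_near m r Hr) as Hnear.
    rewrite <- Hdiv, <- Delta_odd3_zsum in Hnear.
    apply IZR_le in Hnear. rewrite <- Rabs_Zabs, minus_IZR in Hnear. apply Rabs_le_between' in Hnear.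
    exists k. replace (INR 4) with 4 in * by (cbn; lra).
    replace (INR 32) with 32 in * by (cbn; lra). replace (INR 128) with 128 in * by (cbn; lra).
    rewrite Rmult_1_l in HG1. lra.
Qed.

Lemma is_lim_seq_div_of_bounded_gap (u v : nat -> R) (c M : R) :
  is_lim_seq u p_infty ->
  eventually (fun n => Rabs (v n - c * u n) <= M) ->
  is_lim_seq (fun n => v n / u n) c.
Proof.
  intros Hu [N HM].
  destruct (proj2 (is_lim_seq_spec u p_infty) Hu 0) as [N' Hpos].
  assert (Hinv : is_lim_seq (fun n => / u n) 0)
    by exact (is_lim_seq_inv u p_infty Hu ltac:(discriminate)).
  assert (Hgap : is_lim_seq (fun n => (v n - c * u n) / u n) 0).
  { apply is_lim_seq_le_le_loc with (fun n => - M * / u n) (fun n => M * / u n).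
    - exists (max N N'). intros n Hn.
      specialize (HM n ltac:(lia)). specialize (Hpos n ltac:(lia)).
      apply Rabs_le_between in HM. pose proof (Rinv_0_lt_compat _ Hpos).
      unfold Rdiv. split; apply Rmult_le_compat_r; lra.
    - replace (Finite 0) with (Rbar_mult (- M) 0) by (cbn; f_equal; ring).
      now apply is_lim_seq_scal_l.
    - replace (Finite 0) with (Rbar_mult M 0) by (cbn; f_equal; ring).
      now apply is_lim_seq_scal_l. }
  apply is_lim_seq_ext_loc with (fun n => c + (v n - c * u n) / u n).
  - exists N'. intros n Hn. specialize (Hpos n Hn). field. lra.
  - replace (Finite c) with (Finite (c + 0)) by (f_equal; ring).
    apply is_lim_seq_plus'; [apply is_lim_seq_const | exact Hgap].
Qed.

Lemma ln_between_pow (a c1 c2 x : R) (k : nat) :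
  0 < a -> 0 < c1 -> c1 * a ^ k <= x <= c2 * a ^ k ->
  ln c1 <= ln x - INR k * ln a <= ln c2.
Proof.
  intros Ha Hc1 Hx.
  assert (Hak : 0 < a ^ k) by (apply pow_lt, Ha).
  assert (Hx' : c1 <= x / a ^ k <= c2).
  { split; [apply Rle_div_r | apply Rle_div_l]; lra. }
  replace (ln x - INR k * ln a) with (ln (x / a ^ k)).
  - split; apply ln_le; lra.
  - rewrite ln_div, ln_pow by nra. reflexivity.
Qed.

Lemma Rabs_le_sum_ends p q t : p <= t <= q -> Rabs t <= Rabs p + Rabs q.
Proof. intro Ht. apply Rabs_le_between. split_Rabs; lra. Qed.

(* Writing [x ~ a^k] and [y ~ b^k], the linear combination
   [ln y - (ln b / ln a) ln x] cancels the [k]-dependence. *)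
Lemma ln_ratio_limit (a b c1 c2 d1 d2 : R) (x y : nat -> R) :
  1 < a -> 0 < b -> 0 < c1 -> 0 < d1 ->
  is_lim_seq x p_infty ->
  eventually (fun n => exists k,
    c1 * a ^ k <= x n <= c2 * a ^ k /\ d1 * b ^ k <= y n <= d2 * b ^ k) ->
  is_lim_seq (fun n => ln (y n) / ln (x n)) (ln b / ln a).
Proof.
  intros Ha Hb Hc1 Hd1 Hx [N Hbounds].
  assert (Hlna : 0 < ln a) by (rewrite <- ln_1; apply ln_increasing; lra).
  apply is_lim_seq_div_of_bounded_gap
    with (M := Rabs (ln d1) + Rabs (ln d2) + Rabs (ln b / ln a) * (Rabs (ln c1) + Rabs (ln c2))).
  - apply is_lim_comp_seq with p_infty; [exact is_lim_ln_p | | exact Hx].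
    exists 0%nat. intros n _. discriminate.
  - exists N. intros n Hn. destruct (Hbounds n Hn) as [k [Hxk Hyk]].
    apply ln_between_pow in Hxk, Hyk; try lra.
    replace (ln (y n) - ln b / ln a * ln (x n))
      with ((ln (y n) - INR k * ln b) - ln b / ln a * (ln (x n) - INR k * ln a))
      by (field; lra).
    eapply Rle_trans; [apply Rabs_triang |]. rewrite Rabs_Ropp, Rabs_mult.
    apply Rabs_le_sum_ends in Hxk, Hyk.
    pose proof (Rabs_pos (ln b / ln a)).
    apply Rplus_le_compat; [exact Hyk | apply Rmult_le_compat_l; assumption].
Qed.

Theorem theorem4 :
  is_lim_seq (fun n : nat => ln (IZR (Delta_odd3 n)) / ln (INR n)) (ln 3 / ln 4).
Proof.
  apply ln_ratio_limit with (c1 := 32) (c2 := 128) (d1 := 1) (d2 := 11); try lra.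
  - exact is_lim_seq_INR.
  - exists 32%nat. intros n Hn.
    destruct (Delta_odd3_geometric n Hn) as [k Hk]. exists k. lra.
Qed.
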